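(* Let $T(\mathrm{GL}_r(q))$ denote, uniformly for all $r$, one of: the scalar matrices $Z(\mathrm{GL}_r(q))$, the diagonal matrices $D(\mathrm{GL}_r(q))$, or the upper-triangular matrices $RT(\mathrm{GL}_r(q))$. Let $n=mk$, $H_1\le\mathrm{GL}_m(q)$ and $H\le H_1\wr\mathrm{Sym}(k)\le\mathrm{GL}_n(q)$. If there exist $g_1,\dots,g_b\in\mathrm{GL}_m(q)$ (respectively $\mathrm{SL}_m(q)$) such that $H_1\cap H_1^{g_1}\cap\dots\cap H_1^{g_b}\le T(\mathrm{GL}_m(q))$, then there exist $x_1,\dots,x_b\in\mathrm{GL}_n(q)$ (respectively $\mathrm{SL}_n(q)$) such that $H\cap H^{x_1}\cap\dots\cap H^{x_b}\le T(\mathrm{GL}_n(q))$.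
   Context: $H_1\wr\mathrm{Sym}(k)$ is the matrix group obtained from the $k\times k$ permutation matrices by replacing each entry $1$ by an arbitrary matrix of $H_1$ and each entry $0$ by the zero $m\times m$ matrix. $H^x=x^{-1}Hx$. *)

From HB Require Import structures.
From mathcomp Require Import all_boot all_order all_algebra all_fingroup.
Set Implicit Arguments. Unset Strict Implicit. Unset Printing Implicit Defensive.
Import GRing.Theory.
Local Open Scope ring_scope.
Local Open Scope group_scope.

(* Entries of a square matrix of size p.+1 addressed by natural-number indices
   (0-based; used only with in-range indices). *)
Definition mxentry (F : nzRingType) (p : nat) (A : 'M[F]_p.+1) (i j : nat) : F :=
  A (inord i) (inord j).

Inductive Tkind := TScalar | TDiagonal | TUpperTri.

Definition Tset (F : finFieldType) (tk : Tkind) (n : nat) : {set {'GL_n[F]}} :=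
  match tk with
  | TScalar => [set x : {'GL_n[F]} | is_scalar_mx (GLval x)]
  | TDiagonal => [set x : {'GL_n[F]} | is_diag_mx (GLval x)]
  | TUpperTri => [set x : {'GL_n[F]} | is_trig_mx (GLval x)^T]
  end.

Definition SLset (F : finFieldType) (n : nat) : {set {'GL_n[F]}} :=
  [set x : {'GL_n[F]} | \det (GLval x) == 1%R].

Definition Amb (F : finFieldType) (sl : bool) (n : nat) : {set {'GL_n[F]}} :=
  if sl then SLset F n else [set: {'GL_n[F]}].

(* H1 wr Sym(k) inside GL_n(F), for n = k*m: block (a,b) of size m x m
   (rows a*m.., columns b*m..) is h a if b = s a and zero otherwise. *)
Definition wreath (F : finFieldType) (m n k : nat) (H1 : {set {'GL_m[F]}})
  : {set {'GL_n[F]}} :=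
  [set x : {'GL_n[F]} |
    [exists s : {perm 'I_k}, exists h : {ffun 'I_k -> {'GL_m[F]}},
      [forall a, h a \in H1] &&
      [forall a : 'I_k, forall b : 'I_k, forall u : 'I_m, forall v : 'I_m,
         mxentry (GLval x) (a * m + u)%N (b * m + v)%N ==
         (if b == s a then mxentry (GLval (h a)) u v else 0%R)]]].

From HB Require Import structures.
From mathcomp Require Import all_boot all_order all_algebra all_fingroup.
From mathcomp Require Import mxtens.

(* Take for x_i the block upper-triangular matrix J (x) g_i, whose k x k blocks
   on and above the diagonal all equal g_i; its determinant is (det g_i)^k, so
   x_i is in SL_n when g_i is in SL_m.  Let y be in H and in H^x_i.  Then y and
   x_i y x_i^-1 are block monomial, with permutations s, t and invertible
   blocks h_a, k_a.  In x_i y = (x_i y x_i^-1) x_i the block (a, c) is nonzero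
   iff a <= s^-1 c on the left and iff t a <= c on the right; this forces
   s = t = 1 and g_i h_c = k_a g_i for a <= c.  So y is block diagonal with a
   single block h = k_0^g_i, which lies in H_1 and in every H_1^g_i, hence in
   T(GL_m); and then y lies in T(GL_n). *)

Set Implicit Arguments. Unset Strict Implicit. Unset Printing Implicit Defensive.
Import GRing.Theory.

Lemma card_ord_le k (x : 'I_k) : #|[set a : 'I_k | a <= x]| = x.+1.
Proof.
have le_x : x.+1 <= k by exact: ltn_ord.
have widen_inj : injective (widen_ord le_x) by move=> a b /(congr1 val) ab; apply: val_inj.
rewrite -[x.+1]card_ord -(card_imset _ widen_inj).
apply: eq_card => a; rewrite !inE; apply/idP/imsetP => [le_ax | [b _ ->] /=].
  by exists (Ordinal (le_ax : a < x.+1)) => //; apply: val_inj.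
by rewrite -ltnS.
Qed.

Lemma perm_galois_eq1 k (s t : {perm 'I_k}) :
  (forall a c : 'I_k, (t a <= c) = (a <= s c)) -> s = 1%g /\ t = 1%g.
Proof.
move=> galois_st.
have s1 : s = 1%g.
  (* t^-1 maps the initial segment [0, c] onto [0, s c]. *)
  apply/permP => c; apply: val_inj; apply: succn_inj; rewrite perm1 -!card_ord_le.
  rewrite -[RHS](card_preimset _ (@perm_inj _ t)).
  by apply: eq_card => a; rewrite !inE galois_st.
split=> //; apply/permP => a; apply: val_inj; apply/eqP.
move: galois_st; rewrite s1 => galois_t.
have le_a_ta : a <= t a by move: (galois_t a (t a)); rewrite leqnn perm1 => <-.
by rewrite perm1 eqn_leq galois_t perm1 leqnn.
Qed.

Section Blocks.
Variables (k m N : nat).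
Hypothesis hN : N.+1 = (k * m)%N.

Definition blk_ord (a : 'I_k) (u : 'I_m) : 'I_N.+1 :=
  cast_ord (esym hN) (mxtens_index (a, u)).

Variant blk_ord_spec : 'I_N.+1 -> Type := BlkOrd a u : blk_ord_spec (blk_ord a u).

Lemma blk_ordP i : blk_ord_spec i.
Proof.
rewrite -[i](cast_ordK hN); case: (mxtens_indexP (cast_ord hN i)) => a u.
exact: BlkOrd.
Qed.

Lemma blk_ord_eq a u c v : (blk_ord a u == blk_ord c v) = (a == c) && (u == v).
Proof. by rewrite -val_eqE /= eq_addl_mul. Qed.

Lemma ltn_blk_ord2l a u v : (blk_ord a u < blk_ord a v) = (u < v).
Proof. exact: ltn_add2l. Qed.

Lemma sum_blk_ord (V : nmodType) (f : 'I_N.+1 -> V) :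
  (\sum_i f i = \sum_a \sum_u f (blk_ord a u))%R.
Proof.
rewrite pair_big /=; apply: (reindex (fun au => blk_ord au.1 au.2)).
exists (fun i => mxtens_unindex (cast_ord hN i)) => [[a u] _ | i _].
  by rewrite /= cast_ordKV mxtens_indexK.
by rewrite /blk_ord -surjective_pairing mxtens_unindexK cast_ordK.
Qed.

Lemma mxentry_blk_ord (R : nzRingType) (A : 'M[R]_N.+1) (a c : 'I_k) (u v : 'I_m) :
  mxentry A (a * m + u) (c * m + v) = A (blk_ord a u) (blk_ord c v).
Proof.
have inord_blk (b : 'I_k) (w : 'I_m) : inord (b * m + w) = blk_ord b w.
  by apply: val_inj; rewrite /= inordK // (ltn_ord (blk_ord b w)).
by rewrite /mxentry !inord_blk.
Qed.

Definition blk_mx (R : Type) (A : 'M[R]_N.+1) (a c : 'I_k) : 'M[R]_m :=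
  \matrix_(u, v) A (blk_ord a u) (blk_ord c v).

Lemma blk_mxM (R : pzSemiRingType) (A B : 'M[R]_N.+1) a c :
  (blk_mx (A *m B) a c = \sum_b blk_mx A a b *m blk_mx B b c)%R.
Proof.
apply/matrixP => u v; rewrite !mxE summxE sum_blk_ord.
by apply: eq_bigr => b _; rewrite mxE; apply: eq_bigr => w _; rewrite !mxE.
Qed.

Definition blk_monomial (R : nmodType) (Y : 'M[R]_N.+1) (s : {perm 'I_k})
    (h : 'I_k -> 'M[R]_m) :=
  forall a c, blk_mx Y a c = if c == s a then h a else 0%R.

Lemma blk_monomialE (R : nmodType) (Y : 'M[R]_N.+1) s h :
  blk_monomial Y s h -> forall a u c v,
  Y (blk_ord a u) (blk_ord c v) = if c == s a then h a u v else 0%R.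
Proof.
move=> hY a u c v; have /matrixP/(_ u v) := hY a c.
by rewrite mxE => ->; case: ifP; rewrite ?mxE.
Qed.

Section BlockScalar.
Variables (R : nzRingType) (Y : 'M[R]_N.+1) (h0 : 'M[R]_m).
Hypothesis hY : blk_monomial Y 1 (fun=> h0).

Lemma blk_scalar_mx : is_scalar_mx h0 -> is_scalar_mx Y.
Proof.
case/is_scalar_mxP => z h0E; apply/is_scalar_mxP; exists z; apply/matrixP => i j.
case/blk_ordP: i => a u; case/blk_ordP: j => c v.
rewrite (blk_monomialE hY) perm1 h0E !mxE blk_ord_eq eq_sym.
by case: eqP; rewrite ?mulr0n.
Qed.

Lemma blk_diag_mx : is_diag_mx h0 -> is_diag_mx Y.
Proof.
move/is_diag_mxP => h0_diag; apply/is_diag_mxP => i j.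
case/blk_ordP: i => a u; case/blk_ordP: j => c v.
rewrite (blk_monomialE hY) perm1; case: (c =P a) => [-> uv|//]; apply: h0_diag.
by apply: contraNneq uv => /val_inj ->.
Qed.

Lemma blk_trig_trmx : is_trig_mx h0^T -> is_trig_mx Y^T.
Proof.
move/is_trig_mxP => h0_trig; apply/is_trig_mxP => i j.
case/blk_ordP: i => a u; case/blk_ordP: j => c v.
rewrite mxE (blk_monomialE hY) perm1.
case: (a =P c) => [->|//]; rewrite ltn_blk_ord2l => uv.
by have := h0_trig u v uv; rewrite mxE.
Qed.

End BlockScalar.

End Blocks.

Lemma eq_if_else0 (V : nmodType) (P Q : bool) (A B : V) :
  A != 0%R -> B != 0%R -> (if P then A else 0%R) = (if Q then B else 0%R) -> P = Q.
Proof. by case: P; case: Q => // nzA nzB E; [move: nzA | move: nzB]; rewrite E eqxx. Qed.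

Section BlockToeplitz.
Local Open Scope ring_scope.

Lemma det_ublock_toeplitz (R : comNzRingType) (m k : nat) (f : nat -> nat -> R) :
  (forall i j, f (m + i)%N (m + j)%N = f i j) ->
  (forall i j, (j < m)%N -> f (m + i)%N j = 0) ->
  \det (\matrix_(i < k * m, j < k * m) f i j) =
    \det (\matrix_(i < m, j < m) f i j) ^+ k.
Proof.
move=> f_shift f_lower; elim: k => [|k IHk]; first by rewrite det_mx00 expr0.
rewrite -[\matrix_(i, j) f i j]submxK /= -/(k * m)%N.
have -> : dlsubmx (\matrix_(i < m + k * m, j < m + k * m) f i j) = 0.
  by apply/matrixP => i j; rewrite !mxE /= f_lower.
rewrite det_ublock exprS -IHk; congr (_ * _); congr (\det _); apply/matrixP => i j.
  by rewrite !mxE.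
by rewrite !mxE /= f_shift.
Qed.

End BlockToeplitz.

Section UpperBlock.
Variables (R : comUnitRingType) (k m' N : nat).
Hypothesis hN : N.+1 = (k * m'.+1)%N.
Local Notation m := m'.+1.
Local Open Scope ring_scope.

(* The entries of J (x) g, J the k x k upper-triangular matrix of ones. *)
Definition upper_block_entry (g : 'M[R]_m) (i j : nat) : R :=
  if (i %/ m <= j %/ m)%N then mxentry g (i %% m) (j %% m) else 0.

Definition upper_block_mx (g : 'M[R]_m) : 'M[R]_N.+1 :=
  \matrix_(i, j) upper_block_entry g i j.

Lemma det_upper_block_mx g : \det (upper_block_mx g) = \det g ^+ k.
Proof.
rewrite /upper_block_mx; move: (N.+1) hN => p ->; rewrite det_ublock_toeplitz.
- congr (\det _ ^+ _); apply/matrixP => i j.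
  by rewrite !mxE /upper_block_entry !divn_small ?modn_small // /mxentry !inord_val.
- move=> i j; rewrite /upper_block_entry !divnDl ?dvdnn // divnn !modnDl.
  by rewrite leq_add2l.
- move=> i j lt_jm.
  by rewrite /upper_block_entry (divn_small lt_jm) divnDl ?dvdnn // divnn.
Qed.

Lemma blk_upper_block_mx g a c :
  blk_mx hN (upper_block_mx g) a c = if (a <= c)%N then g else 0.
Proof.
apply/matrixP => u v; rewrite !mxE /upper_block_entry /=.
rewrite !divnMDl // !divn_small // !addn0 !modnMDl !modn_small //.
by case: ifP; rewrite ?mxE // /mxentry !inord_val.
Qed.

Lemma blk_upper_mul_monomial g Y s h a c :
  blk_monomial hN Y s h ->
  blk_mx hN (upper_block_mx g *m Y) a c =
    if (a <= (s^-1)%g c)%N then g *m h ((s^-1)%g c) else 0.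
Proof.
move=> hY; rewrite blk_mxM (bigD1 (s^-1 c)%g) //= big1 ?addr0 => [|b ne_b].
  by rewrite blk_upper_block_mx hY permKV eqxx; case: ifP; rewrite ?mul0mx.
rewrite hY; case: eqP => [cE|_]; last by rewrite mulmx0.
by move: ne_b; rewrite cE permK eqxx.
Qed.

Lemma blk_monomial_mul_upper g Z t kk a c :
  blk_monomial hN Z t kk ->
  blk_mx hN (Z *m upper_block_mx g) a c =
    if (t a <= c)%N then kk a *m g else 0.
Proof.
move=> hZ; rewrite blk_mxM (bigD1 (t a)) //= big1 ?addr0 => [|b ne_b].
  by rewrite hZ blk_upper_block_mx eqxx; case: ifP; rewrite ?mulmx0.
by rewrite hZ (negPf ne_b) mul0mx.
Qed.

Lemma upper_block_conj_monomial g Y Z s t h kk :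
  g \in unitmx -> (forall a, h a \in unitmx) -> (forall a, kk a \in unitmx) ->
  blk_monomial hN Y s h -> blk_monomial hN Z t kk ->
  upper_block_mx g *m Y = Z *m upper_block_mx g ->
  s = 1%g /\ forall a c : 'I_k, (a <= c)%N -> g *m h c = kk a *m g.
Proof.
move=> g_unit h_unit kk_unit hY hZ conj_YZ.
have blk_conj (a c : 'I_k) : (if (a <= (s^-1)%g c)%N then g *m h ((s^-1)%g c) else 0) =
                    (if (t a <= c)%N then kk a *m g else 0).
  by rewrite -(blk_upper_mul_monomial _ _ _ hY) -(blk_monomial_mul_upper _ _ _ hZ) conj_YZ.
have unit_neq0 (A : 'M[R]_m) : A \in unitmx -> A != 0.
  by apply: contraTneq => ->; rewrite unitmxE det0 unitr0.
have galois (a c : 'I_k) : (t a <= c)%N = (a <= (s^-1)%g c)%N.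
  apply/esym; apply: (eq_if_else0 _ _ (blk_conj a c));
    by rewrite unit_neq0 // unitmx_mul ?g_unit ?h_unit ?kk_unit.
have [s1 t1] := perm_galois_eq1 galois.
split=> [|a c le_ac]; first by apply/eqP; rewrite -invg_eq1 s1.
by have := blk_conj a c; rewrite s1 t1 !perm1 le_ac.
Qed.

End UpperBlock.

Section GLWreath.
Variables (F : finFieldType) (k m' N : nat).
Hypothesis hN : N.+1 = (k * m'.+1)%N.
Local Notation m := m'.+1.
Local Open Scope group_scope.

Lemma wreath_monomial (H1 : {set {'GL_m[F]}}) y :
  y \in wreath N.+1 k H1 -> exists s (h : 'I_k -> {'GL_m[F]}),
    (forall a, h a \in H1) /\ blk_monomial hN (GLval y) s (fun a => GLval (h a)).
Proof.
rewrite inE => /existsP[s /existsP[h /andP[/forallP hH1 /forallP y_blk]]].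
exists s, h; split=> // a c; apply/matrixP => u v.
move: (y_blk a) => /forallP/(_ c)/forallP/(_ u)/forallP/(_ v)/eqP.
rewrite mxentry_blk_ord !mxE => ->.
by case: ifP; rewrite ?mxE // /mxentry !inord_val.
Qed.

Lemma upper_block_mx_unit (g : {'GL_m[F]}) : upper_block_mx N (GLval g) \in unitmx.
Proof.
rewrite unitmxE (det_upper_block_mx hN) GRing.unitrX // -unitmxE.
exact: (GL_unitmx g).
Qed.

Definition upper_block_GL (g : {'GL_m[F]}) : {'GL_N.+1[F]} :=
  Sub (upper_block_mx N (GLval g)) (upper_block_mx_unit g).

Lemma upper_block_GL_Amb sl g : g \in Amb F sl m -> upper_block_GL g \in Amb F sl N.+1.
Proof.
case: sl; rewrite /Amb /SLset !inE // => /eqP det_g.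
by rewrite /= (det_upper_block_mx hN) det_g GRing.expr1n.
Qed.

Lemma wreath_conj_upper_block (H1 : {set {'GL_m[F]}}) (g : {'GL_m[F]})
    (y : {'GL_N.+1[F]}) s (h : 'I_k -> {'GL_m[F]}) :
  blk_monomial hN (GLval y) s (fun a => GLval (h a)) ->
  y ^ (upper_block_GL g)^-1 \in wreath N.+1 k H1 ->
  s = 1 /\ exists2 z, z \in H1 & forall c, h c = z ^ g.
Proof.
set x := upper_block_GL g => hy /wreath_monomial[t [kk [kkH1 hz]]].
have conj_yz : (GLval x *m GLval y = GLval (y ^ x^-1) *m GLval x)%R.
  by rewrite -!GL_MxE conjgE invgK mulgA mulgKV.
have [s1 blk_eq] := upper_block_conj_monomial (GL_unitmx g)
  (fun a => GL_unitmx (h a)) (fun a => GL_unitmx (kk a)) hy hz conj_yz.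
have k_gt0 : (0 < k)%N by rewrite lt0n; apply/eqP => k0; move: hN; rewrite k0.
split=> //; exists (kk (Ordinal k_gt0)) => // c.
have /val_inj gE : GLval (g * h c) = GLval (kk (Ordinal k_gt0) * g) by exact: blk_eq.
by rewrite conjgE -gE mulKg.
Qed.

Lemma mem_Tset_blk_diag tk (y : {'GL_N.+1[F]}) (h0 : {'GL_m[F]}) :
  blk_monomial hN (GLval y) 1 (fun=> GLval h0) ->
  h0 \in Tset F tk m -> y \in Tset F tk N.+1.
Proof.
move=> hy; case: tk; rewrite /Tset !inE.
- exact: blk_scalar_mx hy.
- exact: blk_diag_mx hy.
- exact: blk_trig_trmx hy.
Qed.

End GLWreath.

Local Open Scope group_scope.

Theorem mainTheorem16 (F : finFieldType) (tk : Tkind) (sl : bool) (m k n : nat)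
  (Hm : (0 < m)%N) (Hk : (0 < k)%N) (Hn : n = (k * m)%N)
  (H1 : {group {'GL_m[F]}}) (H : {group {'GL_n[F]}})
  (HH : H \subset wreath n k H1)
  (b : nat) (Hb : (0 < b)%N) (g : 'I_b -> {'GL_m[F]})
  (Hg : forall i, g i \in Amb F sl m)
  (Hbase : H1 :&: \bigcap_(i < b) (H1 :^ g i) \subset Tset F tk m) :
  exists x : 'I_b -> {'GL_n[F]},
    (forall i, x i \in Amb F sl n) /\
    H :&: \bigcap_(i < b) (H :^ x i) \subset Tset F tk n.
Proof.
case: m Hm Hn H1 HH g Hg Hbase => // m' _ Hn H1 HH g Hg Hbase.
case: n Hn H HH => [|N] hN H HH; first by move: hN; rewrite -(prednK Hk) mulSn addSn.
exists (fun i => upper_block_GL hN (g i)); split=> [i|]; first exact: upper_block_GL_Amb.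
apply/subsetP => y /setIP[yH /bigcapP yHx].
have [s [h [hH1 hy]]] := wreath_monomial hN (subsetP HH y yH).
have conj_h i : s = 1 /\ exists2 z, z \in H1 & forall c, h c = z ^ g i.
  by apply: wreath_conj_upper_block hy _; apply: (subsetP HH); rewrite -mem_conjg yHx.
have [s1 [z _ hz]] := conj_h (Ordinal Hb).
apply: (@mem_Tset_blk_diag _ _ _ _ hN _ _ (z ^ g (Ordinal Hb))).
  by move=> a c; rewrite hy s1 hz.
apply: (subsetP Hbase); rewrite -(hz (Ordinal Hk)) inE hH1.
apply/bigcapP => i _; have [_ [zi ziH1 hzi]] := conj_h i.
by rewrite hzi memJ_conjg.
Qed.
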